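(* Let $\lambda\in P_+$ and let $x$ be a finite-dimensional nilpotent $\Lambda$-submodule of $q_\lambda$ (i.e. $x\in\Lambda^\lambda_\beta$ for some $\beta$, identified with a submodule of $q_\lambda$). Let $i,j\in I$ (not necessarily distinct) and let $y$ be a submodule of $q_\lambda$ containing $x$ with $y/x\cong s_j$. Then $$\varphi_i(y)-\varepsilon_i(y)=\varphi_i(x)-\varepsilon_i(x)-a_{ij}.$$
   Context: $\Gamma$ is a finite graph without loops with vertex set $I$; $a_{ii}=2$, and $-a_{ij}$ is the number of edges between $i\ne j$. $\Lambda$ is the preprojective algebra of $\Gamma$ over $\mathbb C$, $s_i$ the simple module at $i$, $q_i$ its injective hull. For a dominant integral weight $\lambda$ of the Kac–Moody algebra of $\Gamma$ (with simple roots $\alpha_i$ and symmetric form $(\alpha_i;\alpha_j)=a_{ij}$), $q_\lambda=\bigoplus_i q_i^{\oplus(\lambda;\alpha_i)}$. A finite-dimensional module is nilpotent if all its composition factors are among the $s_i$. For a submodule $x$ of $q_\lambda$: $\varepsilon_i(x)$ is the multiplicity of $s_i$ in the head (top) of $x$, and $\varphi_i(x)$ is the multiplicity of $s_i$ in the socle of $q_\lambda/x$. *)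

From HB Require Import structures.
From mathcomp Require Import all_boot all_order all_algebra.
From mathcomp Require Import reals complex.
From Stdlib Require Import ClassicalEpsilon.
Set Implicit Arguments.
Unset Strict Implicit.
Unset Printing Implicit Defensive.
Import GRing.Theory.
Local Open Scope ring_scope.

(* The graph Gamma: a finite vertex set I, a finite edge set E, each    *)
(* edge e joining src e and tgt e (an auxiliary orientation Omega,      *)
(* needed to write the preprojective relation), no loops.               *)

Section Preproj.
Variables (I E : finType) (src tgt : E -> I).

Definition cartan (i j : I) : int :=
  if i == j then 2%:Z
  else - (#|[set e : E | ((src e == i) && (tgt e == j))
                        || ((src e == j) && (tgt e == i))]|)%:Z.

(* Arrows of the double quiver: inl e : src e -> tgt e,
   inr e = e^* : tgt e -> src e. *)
Definition hs (h : E + E) : I := match h with inl e => src e | inr e => tgt e end.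
Definition ht (h : E + E) : I := match h with inl e => tgt e | inr e => src e end.

Variable C : fieldType.

(* A (possibly infinite-dimensional) module over the preprojective algebra
   Lambda = C Qbar / (sum_{a in Omega} (a a^* - a^* a)), presented by the
   action of its generators: the vertex idempotents e_i and the arrows. *)
Record pmod := PMod {
  carrier : lmodType C;
  idem : I -> carrier -> carrier;
  act : E + E -> carrier -> carrier;
  idem_lin : forall i, linear (idem i);
  act_lin : forall h, linear (act h);
  idem_orth : forall i j v, idem i (idem j v) = if i == j then idem i v else 0;
  idem_sum : forall v, \sum_(i : I) idem i v = v;
  act_idem : forall h v, act h v = idem (ht h) (act h (idem (hs h) v));
  preproj_rel : forall v,
    \sum_(e : E) (act (inl e) (act (inr e) v) - act (inr e) (act (inl e) v)) = 0
}.

Definition is_morph (M N : pmod) (f : carrier M -> carrier N) : Prop :=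
  linear f /\ (forall i v, f (idem i v) = idem i (f v))
  /\ (forall h v, f (act h v) = act h (f v)).

Definition vset (V : Type) := V -> Prop.

Definition set_sub (V : Type) (S T : vset V) := forall v, S v -> T v.
Definition set_eq (V : Type) (S T : vset V) := forall v, S v <-> T v.

Definition is_submod (M : pmod) (S : vset (carrier M)) : Prop :=
  S 0 /\ (forall u v, S u -> S v -> S (u + v))
  /\ (forall (a : C) v, S v -> S (a *: v))
  /\ (forall i v, S v -> S (idem i v))
  /\ (forall h v, S v -> S (act h v)).

(* codim V S T n :  dim (T / (S :&: T)) = n, i.e. there are n vectors of T,
   linearly independent modulo S, spanning T modulo S. *)
Definition codim (V : lmodType C) (S T : vset V) (n : nat) : Prop :=
  exists vs : n.-tuple V,
    (forall k, T (tnth vs k))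
    /\ (forall c : 'I_n -> C, S (\sum_k c k *: tnth vs k) -> forall k, c k = 0)
    /\ (forall t, T t -> exists c : 'I_n -> C, S (t - \sum_k c k *: tnth vs k)).

Definition zero_set (V : lmodType C) : vset V := fun v => v = 0.

(* The dimension (a natural number, chosen by classical choice among the
   witnesses of codim; it is unique whenever it exists). *)
Definition qdim (V : lmodType C) (S T : vset V) : nat :=
  epsilon (inhabits 0%N) (fun n => codim S T n).

Definition at_vertex (M : pmod) (i : I) (S : vset (carrier M)) : vset (carrier M) :=
  fun v => S v /\ idem i v = v.

(* T/S is isomorphic to the simple module s_j (S, T submodules, S <= T):
   T = S + C v with v at vertex j, v not in S, and every arrow sends v into S. *)
Definition quot_is_simple_s (M : pmod) (S T : vset (carrier M)) (j : I) : Prop :=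
  set_sub S T /\
  exists v, T v /\ ~ S v /\ idem j v = v /\ (forall h, S (act h v)) /\
    (forall t, T t -> exists a : C, S (t - a *: v)).

Definition fd_nilpotent (M : pmod) (S : vset (carrier M)) : Prop :=
  (exists n, codim (zero_set (V:=carrier M)) S n) /\
  exists (n : nat) (ch : nat -> vset (carrier M)),
    set_eq (ch 0%N) (zero_set (V:=carrier M)) /\ set_eq (ch n) S /\
    (forall k, (k <= n)%N -> is_submod (ch k)) /\
    (forall k, (k < n)%N -> exists i, quot_is_simple_s (ch k) (ch k.+1) i).

(* A module is locally nilpotent if each vector lies in a finite-dimensional
   nilpotent submodule. This is the category in which injective hulls are taken. *)
Definition loc_nilpotent (M : pmod) : Prop :=
  forall v : carrier M, exists S, is_submod S /\ fd_nilpotent S /\ S v.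

Definition injective_ln (Q : pmod) : Prop :=
  forall (A B : pmod) (g : carrier A -> carrier B) (u : carrier A -> carrier Q),
    loc_nilpotent A -> loc_nilpotent B ->
    is_morph g -> injective g -> is_morph u ->
    exists w : carrier B -> carrier Q, is_morph w /\ forall a, w (g a) = u a.

(* The semisimple module s_lambda = (+)_i s_i^(lam i), realised on
   functions {i : I & 'I_(lam i)} -> C, the coordinate (i,k) being a copy of s_i. *)
Section SLambda.
Variable lam : I -> nat.
Definition slam_index := {i : I & 'I_(lam i)}.
Definition slam_carrier : lmodType C := {ffun slam_index -> C^o}.
Definition slam_idem (i : I) (f : slam_carrier) : slam_carrier :=
  [ffun t => if tag t == i then f t else 0].
Definition slam_act (h : E + E) (f : slam_carrier) : slam_carrier := 0.

Lemma slam_idem_lin i : linear (slam_idem i).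
Proof.
move=> a u v; apply/ffunP => t; rewrite !ffunE.
by case: ifP => _; rewrite ?ffunE // scaler0 addr0.
Qed.

Lemma slam_act_lin h : linear (slam_act h).
Proof. by move=> a u v; rewrite /slam_act scaler0 addr0. Qed.

Lemma slam_idem_orth i j v :
  slam_idem i (slam_idem j v) = if i == j then slam_idem i v else 0.
Proof.
apply/ffunP => t; rewrite /slam_idem.
have E0 : forall t, (0 : slam_carrier) t = 0 by move=> t'; rewrite ffunE.
case: (eqVneq i j) => [->|nij]; rewrite ?E0 !ffunE.
  by case: (tag t == j).
case: ifP => [/eqP ti|//]; case: ifP => [/eqP tj|//].
by move: nij; rewrite -ti tj eqxx.
Qed.

Lemma slam_idem_sum v : \sum_(i : I) slam_idem i v = v.
Proof.
apply/ffunP => t; rewrite sum_ffunE (bigD1 (tag t)) //= ffunE eqxx big1 ?addr0 //.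
by move=> i ni; rewrite ffunE eq_sym (negbTE ni).
Qed.

Lemma slam_act_idem h v :
  slam_act h v = slam_idem (ht h) (slam_act h (slam_idem (hs h) v)).
Proof.
apply/ffunP => t; rewrite /slam_act /slam_idem !ffunE.
by case: ifP.
Qed.

Lemma slam_preproj v :
  \sum_(e : E) (slam_act (inl e) (slam_act (inr e) v)
                - slam_act (inr e) (slam_act (inl e) v)) = 0.
Proof. by rewrite big1 // => e _; rewrite /slam_act subrr. Qed.

Definition s_lambda : pmod :=
  @PMod slam_carrier slam_idem slam_act slam_idem_lin slam_act_lin
        slam_idem_orth slam_idem_sum slam_act_idem slam_preproj.
End SLambda.

(* Q is an injective hull of s_lambda in the category of locally nilpotent
   Lambda-modules: Q is locally nilpotent and injective there, and there is a
   monomorphism s_lambda -> Q whose image is essential. Any such Q is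
   isomorphic to q_lambda = (+)_i q_i^(lam i). *)
Definition is_q_lambda (lam : I -> nat) (Q : pmod) : Prop :=
  loc_nilpotent Q /\ injective_ln Q /\
  exists f : carrier (s_lambda lam) -> carrier Q,
    is_morph f /\ injective f /\
    forall S : vset (carrier Q), is_submod S -> (exists v, S v /\ v <> 0) ->
      exists w, S w /\ w <> 0 /\ exists u, w = f u.

Section Crystal.
Variable Q : pmod.

Definition maximal_sub (x m : vset (carrier Q)) : Prop :=
  is_submod m /\ set_sub m x /\ (exists v, x v /\ ~ m v) /\
  forall w, is_submod w -> set_sub m w -> set_sub w x -> set_eq w m \/ set_eq w x.

Definition radical (x : vset (carrier Q)) : vset (carrier Q) :=
  fun v => x v /\ forall m, maximal_sub x m -> m v.

(* eps_i(x) = multiplicity of s_i in the head x / rad x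
             = dim e_i (x / rad x). *)
Definition eps (i : I) (x : vset (carrier Q)) : nat :=
  qdim (at_vertex i (radical x)) (at_vertex i x).

Definition simple_over (x z : vset (carrier Q)) : Prop :=
  is_submod z /\ set_sub x z /\ (exists v, z v /\ ~ x v) /\
  forall w, is_submod w -> set_sub x w -> set_sub w z -> set_eq w x \/ set_eq w z.

(* Preimage in Q of the socle of Q/x: x + (sum of all z with z/x simple). *)
Definition socle_over (x : vset (carrier Q)) : vset (carrier Q) :=
  fun v => exists (x0 : carrier Q) (s : seq (carrier Q)),
    x x0 /\ (forall w, w \in s -> exists z, simple_over x z /\ z w)
    /\ v = x0 + \sum_(w <- s) w.

(* phi_i(x) = multiplicity of s_i in soc(Q/x) = dim e_i (soc(Q/x)). *)
Definition phi (i : I) (x : vset (carrier Q)) : nat :=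
  qdim (at_vertex i x) (at_vertex i (socle_over x)).
End Crystal.

End Preproj.

(* Write d_l(x) for the dimension of e_l x.  For a finite-dimensional
   nilpotent submodule x of the injective hull Q = q_lambda,
     phi_k(x) - eps_k(x) = lambda_k + sum_{arrows h : k -> l} d_l(x) - 2 d_k(x),
   and the theorem follows, since passing from x to y raises d_j by one and
   a_kj = 2 delta_kj - #{arrows k -> j} in the double quiver.  The formula
   comes from two rank-nullity computations.  The map
     beta (u_h)_h = sum_e (e u_(e^* ) - e^* u_e)
   on families u_h in e_l x indexed by the arrows h : k -> l has image
   e_k rad x, the arrow images of x at k (Nakayama).  Its kernel is the image
   of w |-> (h w)_h on e_k of the preimage of soc(Q/x): by injectivity of Q, a
   solution u extends Q by a vector with arrow images u, which lifts to Q.  The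
   kernel of that map is e_k soc Q, of dimension lambda_k since Q is an
   essential extension of s_lambda. *)

From HB Require Import structures.
From mathcomp Require Import all_boot all_order all_algebra.
From mathcomp Require Import reals complex zify.
From Stdlib Require Import ClassicalEpsilon.
Set Implicit Arguments.
Unset Strict Implicit.
Unset Printing Implicit Defensive.
Import GRing.Theory.
Local Open Scope ring_scope.

Section Codim.
Variables (F : fieldType) (V : lmodType F).
Implicit Types (S T U : vset V) (t u v w : V).

Definition is_subspace S :=
  S 0 /\ (forall u v, S u -> S v -> S (u + v)) /\ (forall a v, S v -> S (a *: v)).

Definition lincomb n (vs : n.-tuple V) (c : 'I_n -> F) : V := \sum_k c k *: tnth vs k.

Definition span_mod S n (vs : n.-tuple V) : vset V :=
  fun t => exists c, S (t - lincomb vs c).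

Definition add_line S w : vset V := fun t => exists a, S (t - a *: w).

Lemma set_eq_sym S T : set_eq S T -> set_eq T S.
Proof. by move=> eST t; apply: iff_sym. Qed.


Lemma subspace0 S : is_subspace S -> S 0.
Proof. by case. Qed.

Lemma subspaceD S u v : is_subspace S -> S u -> S v -> S (u + v).
Proof. by case=> _ [+ _]; apply. Qed.

Lemma subspaceZ S a v : is_subspace S -> S v -> S (a *: v).
Proof. by case=> _ [_]; apply. Qed.

Lemma subspaceN S v : is_subspace S -> S v -> S (- v).
Proof. by move=> hS Sv; rewrite -scaleN1r; apply: subspaceZ. Qed.

Lemma subspaceB S u v : is_subspace S -> S u -> S v -> S (u - v).
Proof. by move=> hS Su Sv; apply: subspaceD (subspaceN hS Sv). Qed.

Lemma subspace_sum S (J : finType) (P : pred J) (f : J -> V) :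
  is_subspace S -> (forall j, P j -> S (f j)) -> S (\sum_(j | P j) f j).
Proof.
move=> hS Sf; apply: (big_ind S) => //; first exact: subspace0.
by move=> u v; apply: subspaceD.
Qed.

Lemma subspace_lincomb S n (vs : n.-tuple V) c :
  is_subspace S -> (forall k, S (tnth vs k)) -> S (lincomb vs c).
Proof. by move=> hS Svs; apply: subspace_sum => // k _; apply: subspaceZ. Qed.

Lemma zero_set_sub S : is_subspace S -> set_sub (@zero_set F V) S.
Proof. by move=> hS t ->; apply: subspace0. Qed.

Lemma subspace_ext S S' : set_eq S S' -> is_subspace S -> is_subspace S'.
Proof.
move=> eS [S0 [SD SZ]]; split; [exact/eS | split].
- by move=> u v /eS Su /eS Sv; apply/eS; apply: SD.
- by move=> a v /eS Sv; apply/eS; apply: SZ.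
Qed.

Lemma zero_subspace : is_subspace (@zero_set F V).
Proof.
by split=> //; split=> [u v -> ->|a v ->]; rewrite ?addr0 ?scaler0.
Qed.

Lemma lincomb0 n (vs : n.-tuple V) : lincomb vs (fun _ => 0) = 0.
Proof. by rewrite /lincomb big1 // => k _; rewrite scale0r. Qed.

Lemma lincombD n (vs : n.-tuple V) c1 c2 :
  lincomb vs (fun k => c1 k + c2 k) = lincomb vs c1 + lincomb vs c2.
Proof. by rewrite /lincomb -big_split; apply: eq_bigr => k _; rewrite scalerDl. Qed.

Lemma lincombZ n (vs : n.-tuple V) a c :
  lincomb vs (fun k => a * c k) = a *: lincomb vs c.
Proof. by rewrite /lincomb scaler_sumr; apply: eq_bigr => k _; rewrite scalerA. Qed.

Lemma lincombN n (vs : n.-tuple V) c : lincomb vs (fun k => - c k) = - lincomb vs c.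
Proof. by rewrite /lincomb -sumrN; apply: eq_bigr => k _; rewrite scaleNr. Qed.

Lemma lincomb1 t c : lincomb [tuple t] c = c ord0 *: t.
Proof. by rewrite /lincomb big_ord1. Qed.

Lemma lincomb_cat a b (vs : a.-tuple V) (ws : b.-tuple V) c :
  lincomb [tuple of vs ++ ws] c =
  lincomb vs (fun k => c (lshift b k)) + lincomb ws (fun k => c (rshift a k)).
Proof.
rewrite /lincomb big_split_ord /=; congr (_ + _); apply: eq_bigr => k _.
  by rewrite tnth_lshift.
by rewrite tnth_rshift.
Qed.

Lemma lincomb_eq0 n (vs : n.-tuple V) c : (forall k, c k = 0) -> lincomb vs c = 0.
Proof. by move=> c0; rewrite /lincomb big1 // => k _; rewrite c0 scale0r. Qed.

Definition join_coef a b (c1 : 'I_a -> F) (c2 : 'I_b -> F) (k : 'I_(a + b)) : F :=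
  match split k with inl k1 => c1 k1 | inr k2 => c2 k2 end.

Lemma lincomb_join a b (vs : a.-tuple V) (ws : b.-tuple V) c1 c2 :
  lincomb [tuple of vs ++ ws] (join_coef c1 c2) = lincomb vs c1 + lincomb ws c2.
Proof.
rewrite lincomb_cat /join_coef; congr (_ + _); apply: eq_bigr => k _.
  by rewrite (unsplitK (inl k)).
by rewrite (unsplitK (inr k)).
Qed.

Lemma split_forall a b (P : 'I_(a + b) -> Prop) :
  (forall k, P (lshift b k)) -> (forall k, P (rshift a k)) -> forall k, P k.
Proof. by move=> Pl Pr k; rewrite -(splitK k); case: (split k). Qed.

Lemma tnth_catP a b (P : V -> Prop) (vs : a.-tuple V) (ws : b.-tuple V) :
  (forall k, P (tnth vs k)) -> (forall k, P (tnth ws k)) ->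
  forall k, P (tnth [tuple of vs ++ ws] k).
Proof.
move=> Pvs Pws; apply: split_forall => k; by rewrite ?tnth_lshift ?tnth_rshift.
Qed.

Lemma codim_ext S S' T T' n :
  set_eq S S' -> set_eq T T' -> codim S T n -> codim S' T' n.
Proof.
move=> eS eT [vs [Tvs [free span]]]; exists vs; split; [|split].
- by move=> k; apply/eT.
- by move=> c /eS; apply: free.
- by move=> t /eT /span [c Sc]; exists c; apply/eS.
Qed.

Lemma codim0 S T : set_sub T S -> codim S T 0.
Proof.
move=> TS; exists [tuple]; split; [by case | split; first by move=> c _ []].
by move=> t /TS St; exists (fun _ => 0); rewrite big_ord0 subr0.
Qed.

(* The coordinate matrix of the [ws] on the [vs] has full row rank. *)
Lemma codim_le S n (vs : n.-tuple V) m (ws : m.-tuple V) :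
  is_subspace S -> (forall k, span_mod S vs (tnth ws k)) ->
  (forall c, S (lincomb ws c) -> forall k, c k = 0) -> (m <= n)%N.
Proof.
move=> hS ws_span ws_free; have [cc Hcc] := choice _ ws_span.
pose M : 'M[F]_(m, n) := \matrix_(k, l) cc k l.
suff /eqP <- : row_free M by apply: rank_leq_col.
apply: inj_row_free => a aM0; apply/rowP => k; rewrite mxE.
apply: (ws_free (fun k => a 0 k)).
have comb0 : \sum_k a 0 k *: lincomb vs (cc k) = 0.
  rewrite /lincomb; under eq_bigr do rewrite scaler_sumr.
  rewrite exchange_big /= big1 // => l _.
  under eq_bigr do rewrite scalerA; rewrite -scaler_suml.
  suff -> : \sum_i a 0 i * cc i l = 0 by rewrite scale0r.
  have := congr1 (fun B : 'M_(1, n) => B 0 l) aM0; rewrite !mxE => aMl.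
  by rewrite -[RHS]aMl; apply: eq_bigr => i _; rewrite mxE.
have := @subspace_sum S _ predT (fun k => a 0 k *: (tnth ws k - lincomb vs (cc k))) hS.
under eq_bigr do rewrite scalerBr; rewrite sumrB comb0 subr0; apply=> l _.
exact: subspaceZ.
Qed.

Lemma codim_unique S T n m : is_subspace S -> codim S T n -> codim S T m -> n = m.
Proof.
move=> hS [vs [Tvs [vs_free vs_span]]] [ws [Tws [ws_free ws_span]]].
have n_le_m : (n <= m)%N.
  by apply: (codim_le (vs := ws) hS _ vs_free) => k; exact/ws_span/Tvs.
have m_le_n : (m <= n)%N.
  by apply: (codim_le (vs := vs) hS _ ws_free) => k; exact/vs_span/Tws.
by apply/eqP; rewrite eqn_leq n_le_m m_le_n.
Qed.

Lemma qdim_codim S T n : codim S T n -> codim S T (qdim S T).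
Proof. by move=> cST; apply: (epsilon_spec (inhabits 0%N) _ (ex_intro _ n cST)). Qed.

Lemma qdimE S T n : is_subspace S -> codim S T n -> qdim S T = n.
Proof. by move=> hS cST; apply: codim_unique hS (qdim_codim cST) cST. Qed.

Lemma lincomb_free_rcons S m (ws : m.-tuple V) t :
  is_subspace S -> (forall c, S (lincomb ws c) -> forall k, c k = 0) ->
  ~ span_mod S ws t ->
  forall c, S (lincomb [tuple of ws ++ [tuple t]] c) -> forall k, c k = 0.
Proof.
move=> hS ws_free t_out c; rewrite lincomb_cat lincomb1 => Sc.
set a := c (rshift m ord0) in Sc.
have a0 : a = 0.
  apply/eqP; apply: contraT => an0; case: t_out.
  exists (fun k => - (a^-1 * c (lshift 1 k))); rewrite lincombN lincombZ opprK.
  have -> : t + a^-1 *: lincomb ws (fun k => c (lshift 1 k)) =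
            a^-1 *: (lincomb ws (fun k => c (lshift 1 k)) + a *: t).
    by rewrite scalerDr scalerA mulVf // scale1r addrC.
  exact: subspaceZ.
move: Sc; rewrite a0 scale0r addr0 => /ws_free cl0.
by apply: split_forall => // k; rewrite (ord1 k).
Qed.

(* Otherwise independent families of every length would exist in T. *)
Lemma codim_exists S T n (vs : n.-tuple V) :
  is_subspace S -> set_sub T (span_mod S vs) -> exists m, codim S T m.
Proof.
move=> hS T_span; apply: NNPP => no_codim.
have long_free k : exists m, (k <= m)%N /\ exists ws : m.-tuple V,
    (forall l, T (tnth ws l)) /\ (forall c, S (lincomb ws c) -> forall l, c l = 0).
  elim: k => [|k [m [km [ws [Tws ws_free]]]]].
    exists 0%N; split=> //; exists [tuple]; split; first by case.
    by move=> c _ [].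
  have [t t_new] : exists t, ~ (T t -> span_mod S ws t).
    apply: not_all_ex_not => ws_span; apply: no_codim; exists m, ws.
    by split=> //; split.
  have [Tt t_out] := imply_to_and _ _ t_new.
  exists (m + 1)%N; split; first by rewrite addn1.
  exists [tuple of ws ++ [tuple t]]; split; last exact: lincomb_free_rcons.
  by apply: tnth_catP => // l; rewrite (ord1 l).
have [m [nm [ws [Tws ws_free]]]] := long_free n.+1.
have := codim_le hS (fun k => T_span _ (Tws k)) ws_free.
by move=> /(leq_trans nm); rewrite ltnn.
Qed.

Lemma codim_sub_exists S T T' n :
  is_subspace S -> codim S T n -> set_sub T' T -> exists m, codim S T' m.
Proof.
move=> hS [vs [_ [_ vs_span]]] T'T.
by apply: (codim_exists (vs := vs)) => // t /T'T /vs_span.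
Qed.

Lemma codim_mod_exists S S' T n :
  is_subspace S' -> set_sub S S' -> codim S T n -> exists m, codim S' T m.
Proof.
move=> hS' SS' [vs [_ [_ vs_span]]].
by apply: (codim_exists (vs := vs)) => // t /vs_span [c /SS']; exists c.
Qed.

Lemma codim_add S T U a b :
  is_subspace S -> is_subspace T -> set_sub S T -> set_sub T U ->
  codim S T a -> codim T U b -> codim S U (a + b).
Proof.
move=> hS hT ST TU [vs [Tvs [vs_free vs_span]]] [ws [Uws [ws_free ws_span]]].
exists [tuple of vs ++ ws]; split; [|split].
- by apply: tnth_catP => // k; apply: TU.
- move=> c; rewrite -/(lincomb _ c) lincomb_cat => Sc.
  have cr0 : forall k, c (rshift a k) = 0.
    apply: ws_free.
    have := subspaceB hT (ST _ Sc) (subspace_lincomb (fun k => c (lshift b k)) hT Tvs).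
    by rewrite addrAC subrr add0r.
  move: Sc; rewrite (lincomb_eq0 _ cr0) addr0 => /vs_free cl0.
  exact: split_forall.
- move=> u /ws_span [c2 /vs_span [c1 Sc1]]; exists (join_coef c1 c2).
  by rewrite -/(lincomb _ _) lincomb_join opprD addrA addrAC.
Qed.

Lemma subspace_span_mod S n (vs : n.-tuple V) :
  is_subspace S -> is_subspace (span_mod S vs).
Proof.
move=> hS; split; [|split].
- by exists (fun _ => 0); rewrite lincomb0 subr0; apply: subspace0.
- move=> u v [c1 S1] [c2 S2]; exists (fun k => c1 k + c2 k).
  by rewrite lincombD opprD addrACA; apply: subspaceD.
- move=> a v [c Sc]; exists (fun k => a * c k).
  by rewrite lincombZ -scalerBr; apply: subspaceZ.
Qed.

Lemma span_mod_sub S n (vs : n.-tuple V) : set_sub S (span_mod S vs).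
Proof. by move=> t St; exists (fun _ => 0); rewrite lincomb0 subr0. Qed.

Lemma subspace_add_line S w : is_subspace S -> is_subspace (add_line S w).
Proof.
move=> hS; split; [|split].
- by exists 0; rewrite scale0r subr0; apply: subspace0.
- move=> u v [a Sa] [b Sb]; exists (a + b).
  by rewrite scalerDl opprD addrACA; apply: subspaceD.
- by move=> a v [b Sb]; exists (a * b); rewrite -scalerA -scalerBr; apply: subspaceZ.
Qed.

Lemma add_line_sub S w : set_sub S (add_line S w).
Proof. by move=> t St; exists 0; rewrite scale0r subr0. Qed.

Lemma add_line_vec S w : is_subspace S -> add_line S w w.
Proof. by move=> hS; exists 1; rewrite scale1r subrr; apply: subspace0. Qed.

Lemma add_line_in S w : is_subspace S -> S w -> set_eq (add_line S w) S.
Proof.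
move=> hS Sw t; split=> [[a Sa]|]; last exact: add_line_sub.
by have := subspaceD hS Sa (subspaceZ a hS Sw); rewrite subrK.
Qed.

Lemma codim_line S w : is_subspace S -> ~ S w -> codim S (add_line S w) 1.
Proof.
move=> hS Sw_out; exists [tuple w]; split; [|split].
- by move=> k; rewrite (ord1 k) (tnth_nth 0); apply: add_line_vec.
- move=> c; rewrite -/(lincomb _ c) lincomb1 => Sc k; rewrite (ord1 k).
  apply/eqP; apply: contraT => c0; case: Sw_out.
  by have := subspaceZ (c ord0)^-1 hS Sc; rewrite scalerA mulVf // scale1r.
- by move=> t [a Sa]; exists (fun _ => a); rewrite -/(lincomb _ _) lincomb1.
Qed.

Lemma avoiding_hyperplane S X r n :
  is_subspace S -> ~ S r -> codim (add_line S r) X n ->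
  exists H, [/\ is_subspace H, set_sub S H, ~ H r & forall t, X t -> exists b, H (t - b *: r)].
Proof.
move=> hS Sr [vs [_ [vs_free vs_span]]]; have hSr := subspace_add_line r hS.
exists (span_mod S vs); split; first exact: subspace_span_mod.
- exact: span_mod_sub.
- move=> [c Sc]; have Src : add_line S r r by apply: add_line_vec.
  have /vs_free c0 : add_line S r (lincomb vs c).
    by have := subspaceB hSr Src (add_line_sub r Sc); rewrite opprB addrC subrK.
  by move: Sc; rewrite (lincomb_eq0 _ c0) subr0.
- move=> t /vs_span [c [b Sb]]; exists b, c.
  by rewrite addrAC -/(lincomb vs c).
Qed.

End Codim.

Definition image_of (F : fieldType) (V W : lmodType F) (f : V -> W) (T : vset V) : vset W :=
  fun w => exists t, T t /\ f t = w.

Definition kernel_in (F : fieldType) (V W : lmodType F) (f : V -> W) (T : vset V) : vset V :=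
  fun t => T t /\ f t = 0.

Section LinearMaps.
Variables (F : fieldType) (V W : lmodType F) (f : V -> W).
Hypothesis f_lin : linear f.
Local Notation zero := (@zero_set F _).

Lemma lin0 : f 0 = 0.
Proof.
have := f_lin 1 0 0; rewrite !scale1r addr0 => f00.
by apply: (addrI (f 0)); rewrite addr0 -f00.
Qed.

Lemma linD u v : f (u + v) = f u + f v.
Proof. by have := f_lin 1 u v; rewrite !scale1r. Qed.

Lemma linZ a u : f (a *: u) = a *: f u.
Proof. by have := f_lin a u 0; rewrite !addr0 lin0 addr0. Qed.

Lemma linN u : f (- u) = - f u.
Proof. by rewrite -scaleN1r linZ scaleN1r. Qed.

Lemma linB u v : f (u - v) = f u - f v.
Proof. by rewrite linD linN. Qed.

Lemma lin_sum (J : finType) (P : pred J) (g : J -> V) :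
  f (\sum_(j | P j) g j) = \sum_(j | P j) f (g j).
Proof. exact: (big_morph f linD lin0). Qed.

Lemma lin_lincomb n (vs : n.-tuple V) c : f (lincomb vs c) = lincomb (map_tuple f vs) c.
Proof. by rewrite /lincomb lin_sum; apply: eq_bigr => k _; rewrite linZ tnth_map. Qed.

Lemma codim_image_exists T n : codim zero T n -> exists m, codim zero (image_of f T) m.
Proof.
move=> [vs [_ [_ vs_span]]].
apply: (codim_exists (vs := map_tuple f vs)); first exact: zero_subspace.
move=> _ [t [Tt <-]]; have [c /eqP] := vs_span t Tt; rewrite subr_eq0 => /eqP ->.
by exists c; rewrite lin_lincomb subrr.
Qed.

Lemma codim_rank_nullity T a b :
  is_subspace T -> codim zero (kernel_in f T) a -> codim zero (image_of f T) b ->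
  codim zero T (a + b).
Proof.
move=> hT [ks [Kks [ks_free ks_span]]] [is_ [Iis [is_free is_span]]].
have [pre pre_spec] := choice _ Iis.
pose ps := [tuple pre k | k < b].
have Tps k : T (tnth ps k) by rewrite tnth_mktuple; case: (pre_spec k).
have f_ps : map_tuple f ps = is_.
  by apply: eq_from_tnth => k; rewrite tnth_map tnth_mktuple; case: (pre_spec k).
exists [tuple of ks ++ ps]; split; [|split].
- by apply: tnth_catP => // k; case: (Kks k).
- move=> c; rewrite -/(lincomb _ c) lincomb_cat => comb0.
  have cr0 : forall k, c (rshift a k) = 0.
    apply: is_free; move/(congr1 f): comb0; rewrite linD !lin_lincomb lin0 f_ps.
    rewrite [X in X + _](_ : _ = 0) ?add0r // /lincomb big1 // => k _.
    by rewrite tnth_map; case: (Kks k) => _ ->; rewrite scaler0.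
  move: comb0; rewrite (lincomb_eq0 _ cr0) addr0 => /ks_free cl0.
  exact: split_forall.
- move=> t Tt; have [c2 /eqP] := is_span _ (ex_intro _ t (conj Tt erefl)).
  rewrite -/(lincomb is_ c2) subr_eq0 -f_ps -lin_lincomb => /eqP f_eq.
  have [c1 /eqP] : exists c1, zero (t - lincomb ps c2 - lincomb ks c1).
    apply: ks_span; split; first exact: subspaceB hT Tt (subspace_lincomb _ hT Tps).
    by rewrite linB f_eq subrr.
  rewrite subr_eq0 => /eqP c1_eq.
  exists (join_coef c1 c2); rewrite -/(lincomb _ _) lincomb_join -c1_eq.
  by rewrite subrK subrr.
Qed.

End LinearMaps.

Section ProductCodim.
Variables (F : fieldType) (V : lmodType F) (J : finType).
Variables (Y : J -> vset V) (n : J -> nat).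
Hypothesis Y_sub : forall j, is_subspace (Y j).
Hypothesis Y_codim : forall j, codim (@zero_set F V) (Y j) (n j).

Definition prod_set : vset {ffun J -> V} := fun u => forall j, Y j (u j).

Let supported_in (s : seq J) : vset {ffun J -> V} :=
  fun u => prod_set u /\ forall j, j \notin s -> u j = 0.

Let eval_lin j : linear (fun u : {ffun J -> V} => u j).
Proof. by move=> a u v; rewrite !ffunE. Qed.

Let subspace_supported s : is_subspace (supported_in s).
Proof.
split; [|split].
- by split=> j; rewrite ffunE //; apply: subspace0.
- move=> u v [Yu u0] [Yv v0]; split=> j; rewrite ffunE; first exact: subspaceD.
  by move=> js; rewrite u0 // v0 // addr0.
- move=> a v [Yv v0]; split=> j; rewrite ffunE; first exact: subspaceZ.
  by move=> js; rewrite v0 // scaler0.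
Qed.

(* Induction on the support: evaluation at the new index has the previous
   support as kernel and [Y j] as image. *)
Let codim_supported s : uniq s -> codim (@zero_set F _) (supported_in s) (\sum_(j <- s) n j).
Proof.
elim: s => [_|j s IH /= /andP [js us]].
  rewrite big_nil; apply: codim0 => u [_ u0].
  by apply/ffunP => j; rewrite u0 // ffunE.
rewrite big_cons addnC; apply: (codim_rank_nullity (eval_lin j)).
- exact: subspace_supported.
- apply: codim_ext (IH us) => // u; split.
    move=> [Yu u0]; split; last exact: u0 js.
    by split=> // j'; rewrite in_cons negb_or => /andP [_ /u0].
  move=> [[Yu u0] uj]; split=> // j'; case: (eqVneq j' j) => [-> // | j'j j's].
  by apply: u0; rewrite in_cons negb_or j'j.
- apply: codim_ext (Y_codim j) => // v; split; last by move=> [w [[Yw _] <-]].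
  move=> Yv; exists [ffun j' => if j' == j then v else 0]; rewrite ffunE eqxx.
  split=> //; split=> j'; rewrite ffunE; case: eqP => [-> | _] //.
    exact: subspace0.
  by rewrite mem_head.
Qed.

Lemma codim_prod : codim (@zero_set F _) prod_set (\sum_j n j).
Proof.
apply: codim_ext (codim_supported (index_enum_uniq J)) => // u.
by split=> [[] | Yu] //; split=> // j; rewrite mem_index_enum.
Qed.

End ProductCodim.

Section Modules.
Variables (I E : finType) (src tgt : E -> I) (C : fieldType).
Local Notation hs := (hs src tgt).
Local Notation ht := (ht src tgt).

Section OneModule.
Variable M : pmod src tgt C.
Local Notation V := (carrier M).
Local Notation zero := (@zero_set C V).
Implicit Types (S T A B N : vset V) (t u v w : V).

Lemma idem0 k : idem k (0 : V) = 0. Proof. exact: lin0 (idem_lin k). Qed.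
Lemma idemD k v w : idem k (v + w) = idem k v + idem k w.
Proof. exact: (linD (idem_lin k) v w). Qed.
Lemma idemZ k a v : idem k (a *: v) = a *: idem k v. Proof. exact: (linZ (idem_lin k) a v). Qed.
Lemma idemN k v : idem k (- v) = - idem k v. Proof. exact: (linN (idem_lin k) v). Qed.
Lemma idemB k v w : idem k (v - w) = idem k v - idem k w.
Proof. exact: (linB (idem_lin k) v w). Qed.
Lemma idem_sumr k (J : finType) (P : pred J) (g : J -> V) :
  idem k (\sum_(j | P j) g j) = \sum_(j | P j) idem k (g j).
Proof. exact: (lin_sum (idem_lin k) P g). Qed.

Lemma act0 h : act h (0 : V) = 0. Proof. exact: lin0 (act_lin h). Qed.
Lemma actD h v w : act h (v + w) = act h v + act h w. Proof. exact: (linD (act_lin h) v w). Qed.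
Lemma actZ h a v : act h (a *: v) = a *: act h v. Proof. exact: (linZ (act_lin h) a v). Qed.
Lemma actN h v : act h (- v) = - act h v. Proof. exact: (linN (act_lin h) v). Qed.
Lemma actB h v w : act h (v - w) = act h v - act h w. Proof. exact: (linB (act_lin h) v w). Qed.

Lemma idem_idem k v : idem k (idem k v) = idem k v.
Proof. by rewrite idem_orth eqxx. Qed.

Lemma idem_at k l v : idem l v = v -> idem k v = if k == l then v else 0.
Proof. by move=> lv; rewrite -{1}lv idem_orth; case: eqP => // ->. Qed.

Lemma act_idem_src h v : act h (idem (hs h) v) = act h v.
Proof. by rewrite [RHS]act_idem [LHS]act_idem idem_idem. Qed.

Lemma act_idem_ne h k v : k != hs h -> act h (idem k v) = 0.
Proof. by move=> kh; rewrite act_idem idem_orth eq_sym (negbTE kh) act0 idem0. Qed.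

Lemma idem_act l h v : idem l (act h v) = if l == ht h then act h v else 0.
Proof. by rewrite act_idem idem_orth; case: eqP => // ->. Qed.

Lemma is_morph_id : is_morph (id : V -> V).
Proof. by []. Qed.

Lemma submod_subspace S : is_submod S -> is_subspace S.
Proof. by case=> [S0 [SD [SZ _]]]. Qed.

Lemma submod0 S : is_submod S -> S 0. Proof. by case. Qed.
Lemma submodD S u v : is_submod S -> S u -> S v -> S (u + v).
Proof. by case=> _ [+ _]; apply. Qed.
Lemma submodZ S a v : is_submod S -> S v -> S (a *: v).
Proof. by case=> _ [_ [+ _]]; apply. Qed.
Lemma submodI S k v : is_submod S -> S v -> S (idem k v).
Proof. by case=> _ [_ [_ [+ _]]]; apply. Qed.
Lemma submodA S h v : is_submod S -> S v -> S (act h v).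
Proof. by case=> _ [_ [_ [_]]]; apply. Qed.
Lemma submodN S v : is_submod S -> S v -> S (- v).
Proof. by move/submod_subspace; apply: subspaceN. Qed.
Lemma submodB S u v : is_submod S -> S u -> S v -> S (u - v).
Proof. by move/submod_subspace; apply: subspaceB. Qed.
Lemma submod_sum S (J : finType) (P : pred J) (g : J -> V) :
  is_submod S -> (forall j, P j -> S (g j)) -> S (\sum_(j | P j) g j).
Proof. by move/submod_subspace; apply: subspace_sum. Qed.

Lemma subspace_at_vertex k S : is_submod S -> is_subspace (at_vertex k S).
Proof.
move=> hS; split; [|split].
- by split; [apply: submod0 | rewrite idem0].
- by move=> u v [Su ku] [Sv kv]; split; [apply: submodD | rewrite idemD ku kv].
- by move=> a v [Sv kv]; split; [apply: submodZ | rewrite idemZ kv].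
Qed.

Lemma zero_submod : is_submod zero.
Proof.
split=> //; split; [|split; [|split]].
- by move=> u v -> ->; rewrite addr0.
- by move=> a v ->; rewrite scaler0.
- by move=> k v ->; rewrite idem0.
- by move=> h v ->; rewrite act0.
Qed.

Lemma submod_ext S S' : set_eq S S' -> is_submod S -> is_submod S'.
Proof.
move=> eS [S0 [SD [SZ [SI SA]]]]; split; [exact/eS | split; [|split; [|split]]].
- by move=> u v /eS Su /eS Sv; apply/eS; apply: SD.
- by move=> a v /eS Sv; apply/eS; apply: SZ.
- by move=> k v /eS Sv; apply/eS; apply: SI.
- by move=> h v /eS Sv; apply/eS; apply: SA.
Qed.

Lemma capset_submod A B : is_submod A -> is_submod B -> is_submod (fun t => A t /\ B t).
Proof.
move=> hA hB; split; [|split; [|split; [|split]]].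
- by split; apply: submod0.
- by move=> u v [? ?] [? ?]; split; apply: submodD.
- by move=> a v [? ?]; split; apply: submodZ.
- by move=> k v [? ?]; split; apply: submodI.
- by move=> h v [? ?]; split; apply: submodA.
Qed.

Definition sumset A B : vset V := fun t => exists a b, A a /\ B b /\ t = a + b.

Lemma sumset_submod A B : is_submod A -> is_submod B -> is_submod (sumset A B).
Proof.
move=> hA hB; split; [|split; [|split; [|split]]].
- by exists 0, 0; rewrite addr0; split; [apply: submod0 | split; [apply: submod0 |]].
- move=> u v [a [b [Aa [Bb ->]]]] [a' [b' [Aa' [Bb' ->]]]].
  exists (a + a'), (b + b'); split; [exact: submodD | split; [exact: submodD |]].
  by rewrite addrACA.
- move=> c v [a [b [Aa [Bb ->]]]]; exists (c *: a), (c *: b).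
  by split; [exact: submodZ | split; [exact: submodZ | rewrite scalerDr]].
- move=> k v [a [b [Aa [Bb ->]]]]; exists (idem k a), (idem k b).
  by split; [exact: submodI | split; [exact: submodI | rewrite idemD]].
- move=> h v [a [b [Aa [Bb ->]]]]; exists (act h a), (act h b).
  by split; [exact: submodA | split; [exact: submodA | rewrite actD]].
Qed.

Lemma sumset_l A B : is_submod B -> set_sub A (sumset A B).
Proof. by move=> hB t At; exists t, 0; rewrite addr0; split; [|split; [apply: submod0 |]]. Qed.

Lemma sumset_r A B : is_submod A -> set_sub B (sumset A B).
Proof. by move=> hA t Bt; exists 0, t; rewrite add0r; split; [apply: submod0 |]. Qed.

Lemma sumset_sub A B S : is_submod S -> set_sub A S -> set_sub B S -> set_sub (sumset A B) S.
Proof. by move=> hS AS BS t [a [b [/AS Sa [/BS Sb ->]]]]; apply: submodD. Qed.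

(* The span of the images of [S] under the arrows; for a finite-dimensional
   nilpotent module this is its radical. *)
Definition arrow_span S : vset V :=
  fun t => exists u : E + E -> V, (forall h, S (u h)) /\ t = \sum_h act h (u h).

Lemma act_delta h0 v : \sum_h act h (if h == h0 then v else 0) = act h0 v.
Proof.
rewrite (eq_bigr (fun h => if h == h0 then act h0 v else 0)).
  by rewrite -big_mkcond big_pred1_eq.
by move=> h _; case: eqP => [-> | _]; rewrite ?act0.
Qed.

Lemma arrow_span_act S h v : is_submod S -> S v -> arrow_span S (act h v).
Proof.
move=> hS Sv; exists (fun h' => if h' == h then v else 0); rewrite act_delta.
by split=> // h'; case: eqP => _ //; apply: submod0.
Qed.

Lemma arrow_span_sub S : is_submod S -> set_sub (arrow_span S) S.
Proof. by move=> hS t [u [Su ->]]; apply: submod_sum => // h _; apply: submodA. Qed.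

Lemma arrow_span_submod S : is_submod S -> is_submod (arrow_span S).
Proof.
move=> hS; split; [|split; [|split; [|split]]].
- exists (fun _ => 0); split=> [h|]; first exact: submod0.
  by rewrite big1 // => h _; rewrite act0.
- move=> _ _ [f [Sf ->]] [g [Sg ->]]; exists (fun h => f h + g h).
  split=> [h|]; first exact: submodD.
  by rewrite -big_split; apply: eq_bigr => h _; rewrite actD.
- move=> a _ [f [Sf ->]]; exists (fun h => a *: f h); split=> [h|]; first exact: submodZ.
  by rewrite scaler_sumr; apply: eq_bigr => h _; rewrite actZ.
- move=> k _ [f [Sf ->]]; exists (fun h => if k == ht h then f h else 0).
  split=> [h|]; first by case: eqP => _; [apply: Sf | apply: submod0].
  by rewrite idem_sumr; apply: eq_bigr => h _; rewrite idem_act; case: eqP; rewrite ?act0.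
- move=> h v /(arrow_span_sub hS) Sv; exact: arrow_span_act.
Qed.

Lemma add_line_submod S k w :
  is_submod S -> idem k w = w -> (forall h, S (act h w)) -> is_submod (add_line S w).
Proof.
move=> hS kw Sw; have [L0 [LD LZ]] := subspace_add_line w (submod_subspace hS).
split=> //; split=> //; split=> //; split.
- move=> l v [a Sa]; exists (if l == k then a else 0).
  have := submodI l hS Sa; rewrite idemB idemZ (idem_at l kw).
  by case: eqP; rewrite ?scaler0 ?scale0r.
- move=> h v [a Sa]; exists 0; rewrite scale0r subr0.
  by have := submodD hS (submodA h hS Sa) (submodZ a hS (Sw h)); rewrite actB actZ subrK.
Qed.

Lemma fd_nilpotent_ext S S' : set_eq S S' -> fd_nilpotent S -> fd_nilpotent S'.
Proof.
move=> eS [[n cS] [m [ch [ch0 [chm [ch_sub ch_step]]]]]]; split.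
  by exists n; apply: codim_ext cS.
exists m, ch; do 2!split=> //.
by move=> t; split=> [/chm /eS | /eS /chm].
Qed.

Lemma fd_nilpotent0 : fd_nilpotent zero.
Proof.
split; first by exists 0%N; apply: codim0.
by exists 0%N, (fun _ => zero); do 3!split=> //; move=> l _; apply: zero_submod.
Qed.

Lemma fd_nilpotent_add_line S k w :
  is_submod S -> fd_nilpotent S -> idem k w = w -> (forall h, S (act h w)) ->
  fd_nilpotent (add_line S w).
Proof.
move=> hS fS kw Sw; have hS' := submod_subspace hS.
have [Sw_in | Sw_out] := classic (S w).
  by apply: fd_nilpotent_ext fS => t; split=> [/add_line_sub | /(add_line_in hS' Sw_in)].
case: fS => [[n cS] [m [ch [ch0 [chm [ch_sub ch_step]]]]]]; split.
  exists (n + 1)%N; apply: (codim_add (T := S)) => //.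
  - exact: zero_subspace.
  - by move=> t ->; apply: submod0.
  - exact: add_line_sub.
  - exact: codim_line.
exists m.+1, (fun l => if (l <= m)%N then ch l else add_line S w).
split=> //; split; first by rewrite ltnn.
split=> l.
  by case: (leqP l m) => [lm _ | _ _]; [apply: ch_sub | apply: add_line_submod kw Sw].
rewrite ltnS => lm; rewrite lm; case: (ltnP l m) => [lt_lm | ml]; first exact: ch_step.
have {lm ml} -> : l = m by apply/eqP; rewrite eqn_leq lm ml.
exists k; split=> [t /chm /add_line_sub //|].
exists w; split; first exact: add_line_vec.
split; first by move/chm.
split=> //; split=> [h | t [a Sa]]; first exact/chm.
by exists a; apply/chm.
Qed.

Definition dim_at S l : nat := qdim zero (at_vertex l S).

Lemma codim_dim_at S l :
  is_submod S -> fd_nilpotent S -> codim zero (at_vertex l S) (dim_at S l).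
Proof.
move=> hS [[n cS] _]; have [m' cm'] := codim_image_exists (idem_lin l) cS.
have [m cm] : exists m, codim zero (at_vertex l S) m.
  by apply: (codim_sub_exists (zero_subspace _) cm') => t [St lt]; exists t.
exact: qdim_codim cm.
Qed.

Lemma act_quot_simple X Y j t h :
  is_submod X -> quot_is_simple_s X Y j -> Y t -> X (act h t).
Proof.
move=> hX [_ [v [_ [_ [_ [Xv Yspan]]]]]] /Yspan [a Xa].
by have := submodD hX (submodA h hX Xa) (submodZ a hX (Xv h)); rewrite actB actZ subrK.
Qed.

(* Nakayama's lemma for nilpotent modules: going down a composition series of
   [N], each layer of [B] modulo [A] is pushed into the next one by the arrows. *)
Lemma nakayama A B N :
  is_submod A -> fd_nilpotent N ->
  set_sub B (sumset A N) -> set_sub B (sumset A (arrow_span B)) -> set_sub B A.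
Proof.
move=> hA [_ [n [ch [ch0 [chn [ch_sub ch_step]]]]]] BAN BAJ.
suff B_layer d : (d <= n)%N -> set_sub B (sumset A (ch (n - d)%N)).
  by move=> t /(B_layer n (leqnn n)); rewrite subnn => -[a [b [Aa [/ch0 -> ->]]]]; rewrite addr0.
elim: d => [_ | d IH dn]; first by rewrite subn0 => t /BAN [a [b [Aa [/chn Nb ->]]]]; exists a, b.
move=> t /BAJ [a [_ [Aa [[u [Bu ->]] ->]]]].
have [ab Hab] := choice _ (fun h => IH (ltnW dn) _ (Bu h)).
have [ub Hub] := choice _ Hab.
set k := (n - d.+1)%N; have kS : k.+1 = (n - d)%N by rewrite /k subnSK.
have [j kj] : exists j, quot_is_simple_s (ch k) (ch k.+1) j by apply: ch_step; lia.
have hk : is_submod (ch k) by apply: ch_sub; lia.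
exists (a + \sum_h act h (ab h)), (\sum_h act h (ub h)); split; [|split].
- apply: submodD => //; apply: submod_sum => // h _; apply: submodA => //.
  by case: (Hub h).
- apply: (submod_sum hk) => h _; apply: (act_quot_simple h hk kj).
  by rewrite kS; case: (Hub h) => _ [].
- rewrite -addrA -big_split /=; congr (_ + _); apply: eq_bigr => h _.
  by case: (Hub h) => _ [_ ->]; rewrite actD.
Qed.

Section QuotSimple.
Variables (x y : vset V) (j : I).
Hypotheses (hx : is_submod x) (hy : is_submod y) (xy : quot_is_simple_s x y j).

Lemma quot_simple_add_line :
  exists2 v, idem j v = v /\ (forall h, x (act h v)) & set_eq (add_line x v) y.
Proof.
case: xy => sub_xy [v [yv [_ [jv [xv y_span]]]]]; exists v => // t.
split=> [[a xa] | /y_span //].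
by have := submodD hy (sub_xy _ xa) (submodZ a hy yv); rewrite subrK.
Qed.

Lemma fd_nilpotent_quot_simple : fd_nilpotent x -> fd_nilpotent y.
Proof.
move=> fx; have [v [jv xv] e] := quot_simple_add_line.
exact: fd_nilpotent_ext e (fd_nilpotent_add_line hx fx jv xv).
Qed.

Lemma codim_at_vertex_quot_simple l :
  codim (at_vertex l x) (at_vertex l y) (l == j).
Proof.
case: xy => sub_xy [v [yv [x_out [jv [xv y_span]]]]].
have [-> | lj] := eqVneq l j; last first.
  apply: codim0 => t [/y_span [a xa] lt]; split=> //.
  by have := submodI l hx xa; rewrite idemB idemZ lt -jv idem_orth (negbTE lj) scaler0 subr0.
apply: codim_ext (codim_line (subspace_at_vertex j hx) (fun xjv => x_out xjv.1)) => // t.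
split=> [[a [xa ja]] | [yt jt]].
  split; first by have := submodD hy (sub_xy _ xa) (submodZ a hy yv); rewrite subrK.
  by move: ja; rewrite idemB idemZ jv => /addIr.
have [a xa] := y_span t yt; exists a; split=> //.
by rewrite idemB idemZ jv jt.
Qed.

Lemma dim_at_quot_simple l : fd_nilpotent x -> dim_at y l = (dim_at x l + (l == j))%N.
Proof.
move=> fx; have hxl := subspace_at_vertex l hx.
apply: qdimE (zero_subspace _) _; apply: codim_add (zero_set_sub hxl) _ _ _.
- exact: zero_subspace.
- exact: hxl.
- by move=> t [xt lt]; split=> //; apply: xy.1.
- exact: codim_dim_at.
- exact: codim_at_vertex_quot_simple.
Qed.

End QuotSimple.

End OneModule.
End Modules.

Section SumImage.
Variables (I E : finType) (src tgt : E -> I) (C : fieldType).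
Variables (M N : pmod src tgt C) (g : carrier N -> carrier M).
Hypothesis g_morph : is_morph g.

Let sum_image S T := sumset S (image_of g T).

Lemma fd_nilpotent_sum_image S T :
  is_submod S -> fd_nilpotent S -> is_submod T -> fd_nilpotent T ->
  is_submod (sumset S (image_of g T)) /\ fd_nilpotent (sumset S (image_of g T)).
Proof.
have [g_lin [g_idem g_act]] := g_morph.
move=> hS fS hT [_ [n [ch [ch0 [chn [ch_sub ch_step]]]]]].
suff layer k : (k <= n)%N -> is_submod (sum_image S (ch k)) /\ fd_nilpotent (sum_image S (ch k)).
  have e : set_eq (sum_image S (ch n)) (sum_image S T).
    by move=> t; split=> -[a [_ [Sa [[b [/chn Tb <-]] ->]]]]; exists a, (g b); do 2!split=> //;
      exists b; split=> //; apply/chn.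
  have [hn fn] := layer n (leqnn n).
  by split; [apply: submod_ext e hn | apply: fd_nilpotent_ext e fn].
elim: k => [_ | k IH kn].
  have e0 : set_eq S (sum_image S (ch 0%N)).
    move=> t; split=> [St | [a [_ [Sa [[b [/ch0 -> <-]] ->]]]]]; last by rewrite lin0 // addr0.
    exists t, 0; split=> //; split; last by rewrite addr0.
    by exists 0; split; [apply/ch0 | apply: lin0].
  by split; [apply: submod_ext e0 hS | apply: fd_nilpotent_ext e0 fS].
have [hk fk] := IH (ltnW kn).
have [j [sub_k [v [chv [_ [jv [actv ch_span]]]]]]] := ch_step k kn.
have hk1 : is_submod (ch k.+1) := ch_sub _ kn.
have e1 : set_eq (add_line (sum_image S (ch k)) (g v)) (sum_image S (ch k.+1)).
  move=> t; split.
    move=> [c [a [_ [Sa [[b [chb <-]] t_eq]]]]]; exists a, (g (b + c *: v)); split=> //.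
    split; last by rewrite (linD g_lin) (linZ g_lin) addrA -t_eq subrK.
    exists (b + c *: v); split=> //.
    exact: submodD hk1 (sub_k _ chb) (submodZ c hk1 chv).
  move=> [a [_ [Sa [[b [/ch_span [c chb] <-]] ->]]]].
  exists c, a, (g (b - c *: v)); split=> //; split; first by exists (b - c *: v).
  by rewrite (linB g_lin) (linZ g_lin) addrA.
have jgv : idem j (g v) = g v by rewrite -g_idem jv.
have act_gv h : sum_image S (ch k) (act h (g v)).
  exists 0, (act h (g v)); rewrite add0r; split; first exact: submod0.
  by split=> //; exists (act h v); rewrite g_act.
split; first exact: submod_ext e1 (add_line_submod hk jgv act_gv).
exact: fd_nilpotent_ext e1 (fd_nilpotent_add_line hk fk jgv act_gv).
Qed.

End SumImage.

Section Head.
Variables (I E : finType) (src tgt : E -> I) (C : fieldType) (Q : pmod src tgt C).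
Local Notation V := (carrier Q).
Variable x : vset V.
Hypotheses (hx : is_submod x) (fx : fd_nilpotent x).
Implicit Types (m w H : vset V) (t r : V).

Lemma arrow_span_sub_maximal m : maximal_sub x m -> set_sub (arrow_span x) m.
Proof.
move=> [hm [mx [[v [xv mv]] m_max]]].
have hJ := arrow_span_submod hx; have hw := sumset_submod hm hJ.
have wx : set_sub (sumset m (arrow_span x)) x.
  by apply: sumset_sub => //; apply: arrow_span_sub.
case: (m_max _ hw (sumset_l hJ) wx) => [w_eq | x_eq].
  by move=> t Jt; apply/w_eq; apply: sumset_r.
have x_m : set_sub x m.
  by apply: (nakayama hm fx) => t xt; [apply: (sumset_r hm) | apply/x_eq].
by case: mv; apply: x_m.
Qed.

Lemma submod_preimage_hyperplane k H :
  is_subspace H -> set_sub (at_vertex k (arrow_span x)) H ->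
  is_submod (fun t => x t /\ H (idem k t)).
Proof.
move=> hH JH; split; [|split; [|split; [|split]]].
- by split; [apply: submod0 | rewrite idem0; apply: subspace0].
- by move=> u v [xu Hu] [xv Hv]; split; [apply: submodD | rewrite idemD; apply: subspaceD].
- by move=> a v [xv Hv]; split; [apply: submodZ | rewrite idemZ; apply: subspaceZ].
- move=> l v [xv Hv]; split; first exact: submodI.
  by rewrite idem_orth; case: eqP => // _; apply: subspace0.
- move=> h v [xv _]; split; first exact: submodA.
  apply: JH; split; last exact: idem_idem.
  exact: submodI (arrow_span_submod hx) (arrow_span_act h hx xv).
Qed.

Lemma maximal_preimage_hyperplane k H r :
  is_subspace H -> set_sub (at_vertex k (arrow_span x)) H -> ~ H r -> at_vertex k x r ->
  (forall t, at_vertex k x t -> exists b, H (t - b *: r)) ->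
  maximal_sub x (fun t => x t /\ H (idem k t)).
Proof.
move=> hH JH Hr [xr kr] H_span.
have xk t : x t -> at_vertex k x (idem k t).
  by move=> xt; split; [apply: submodI | apply: idem_idem].
split; first exact: submod_preimage_hyperplane.
split; first by move=> t [].
split; first by exists r; rewrite kr; split=> // -[].
move=> w hw mw wx; have [[t [wt mt]] | w_m] := classic (exists t, w t /\ ~ (x t /\ H (idem k t))).
  right=> t'; split=> [/wx // | xt'].
  have xt := wx _ wt; have [b Hb] := H_span _ (xk _ xt).
  have b0 : b != 0.
    by apply/eqP => b0; apply: mt; split=> //; move: Hb; rewrite b0 scale0r subr0.
  have [a Ha] := H_span _ (xk _ xt').
  pose q := a / b.
  have m_t' : x (t' - q *: idem k t) /\ H (idem k (t' - q *: idem k t)).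
    split; first by apply: submodB => //; apply: submodZ => //; apply: submodI.
    have -> : idem k (t' - q *: idem k t) = (idem k t' - a *: r) - q *: (idem k t - b *: r).
      by rewrite idemB idemZ idem_idem scalerBr scalerA /q mulfVK // opprB addrA subrK.
    by apply: subspaceB => //; apply: subspaceZ.
  by have := submodD hw (mw _ m_t') (submodZ q hw (submodI k hw wt)); rewrite subrK.
left=> t; split=> [wt | /mw //]; apply: NNPP => mt.
by apply: w_m; exists t.
Qed.

Lemma exists_maximal_avoiding k r :
  at_vertex k x r -> ~ arrow_span x r -> exists m, maximal_sub x m /\ ~ m r.
Proof.
move=> xkr Jr; have hJ := subspace_at_vertex k (arrow_span_submod hx).
have [n cn] : exists n, codim (add_line (at_vertex k (arrow_span x)) r) (at_vertex k x) n.
  apply: codim_mod_exists (codim_dim_at k hx fx).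
    exact: subspace_add_line.
  by move=> t ->; apply: add_line_sub; apply: subspace0.
have [H [hH JH Hr H_span]] := avoiding_hyperplane hJ (fun Jkr => Jr (proj1 Jkr)) cn.
exists (fun t => x t /\ H (idem k t)).
split; first exact: maximal_preimage_hyperplane hH JH Hr xkr H_span.
by case: xkr => _ kr [_]; rewrite kr.
Qed.

Lemma radical_at_vertex k : set_eq (at_vertex k (radical x)) (at_vertex k (arrow_span x)).
Proof.
move=> r; split=> [[[xr r_max] kr] | [Jr kr]]; split=> //.
  apply: NNPP => Jr; have [m [m_max mr]] := exists_maximal_avoiding (conj xr kr) Jr.
  exact: mr (r_max _ m_max).
split; first exact: arrow_span_sub Jr.
by move=> m m_max; apply: arrow_span_sub_maximal.
Qed.

End Head.

Section Socle.
Variables (I E : finType) (src tgt : E -> I) (C : fieldType) (Q : pmod src tgt C).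
Local Notation V := (carrier Q).
Hypothesis Q_ln : loc_nilpotent Q.
Variable x : vset V.
Hypothesis hx : is_submod x.
Implicit Types (z w : vset V) (t v : V).

(* [e_k] of the preimage of the socle of [Q/x]. *)
Definition socle_preimage_at k : vset V := fun t => idem k t = t /\ forall h, x (act h t).

(* If the arrows did not map [z] into [x], then [z = x + arrow_span z], and
   Nakayama's lemma applied inside a finite-dimensional nilpotent submodule
   containing a vector of [z] outside [x] gives a contradiction. *)
Lemma act_simple_over z t h : simple_over x z -> z t -> x (act h t).
Proof.
move=> [hz [xz [[v [zv xv]] z_simple]]] zt.
have hJ := arrow_span_submod hz; have hxJ := sumset_submod hx hJ.
have xJ_z : set_sub (sumset x (arrow_span z)) z.
  by apply: sumset_sub => //; apply: arrow_span_sub.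
case: (z_simple _ hxJ (sumset_l hJ) xJ_z) => [xJ_x | xJ_z'].
  by apply/xJ_x/sumset_r => //; apply: arrow_span_act.
have [S [hS [fS Sv]]] := Q_ln v.
have hw := capset_submod hz (sumset_submod hx hS).
have x_w : set_sub x (fun t => z t /\ sumset x S t).
  by move=> t' xt'; split; [apply: xz | apply: sumset_l].
case: (z_simple _ hw x_w (fun t' => @proj1 _ _)) => [w_x | w_z].
  by case: xv; apply/w_x; split=> //; apply: sumset_r.
have z_x : set_sub z x.
  by apply: (nakayama hx fS) => t' zt'; [case: (w_z t') => _ /(_ zt') [] | apply/xJ_z'].
by case: xv; apply: z_x.
Qed.

Lemma simple_over_add_line k t :
  socle_preimage_at k t -> ~ x t -> simple_over x (add_line x t).
Proof.
move=> [kt xt] x_out; have hx' := submod_subspace hx.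
split; first exact: add_line_submod kt xt.
split; first exact: add_line_sub.
split; first by exists t; split; [apply: add_line_vec |].
move=> w hw xw wl; have [[u [wu xu]] | w_x] := classic (exists u, w u /\ ~ x u).
  right=> v; split=> [/wl // | [b xb]].
  have [a xa] := wl _ wu.
  have a0 : a != 0 by apply/eqP => a0; apply: xu; move: xa; rewrite a0 scale0r subr0.
  have wt : w t.
    have := submodZ a^-1 hw (submodB hw wu (xw _ xa)).
    by rewrite opprB addrC subrK scalerA mulVf // scale1r.
  by have := submodD hw (xw _ xb) (submodZ b hw wt); rewrite subrK.
left=> v; split=> [wv | /xw //]; apply: NNPP => xv.
by apply: w_x; exists v.
Qed.

Lemma socle_over_at_vertex k : set_eq (at_vertex k (socle_over x)) (socle_preimage_at k).
Proof.
move=> t; split.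
  move=> [[x0 [s [xx0 [s_simple ->]]]] kt]; split=> // h.
  rewrite actD (big_morph (act h) (actD h) (act0 Q h)).
  apply: submodD hx _ _; first exact: submodA.
  rewrite big_seq; apply: (big_ind x); [exact: submod0 | by move=> ? ?; apply: submodD |].
  by move=> w /s_simple [z [z_simple zw]]; apply: act_simple_over z_simple zw.
move=> tk; split; last exact: tk.1.
have [xt | x_out] := classic (x t).
  by exists t, [::]; rewrite big_nil addr0.
exists 0, [:: t]; split; first exact: submod0.
split; last by rewrite big_seq1 add0r.
move=> w; rewrite inE => /eqP ->; exists (add_line x t).
by split; [apply: simple_over_add_line tk x_out | apply: add_line_vec (submod_subspace hx)].
Qed.

End Socle.

Section SocleDimension.
Variables (I E : finType) (src tgt : E -> I) (C : fieldType) (lam : I -> nat).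
Local Notation SL := (s_lambda src tgt C lam).
Local Notation tagged_lam := (Tagged (fun i => 'I_(lam i))).

Definition slam_delta k (l : 'I_(lam k)) : carrier SL :=
  [ffun t => if t == tagged_lam l then 1 else 0].
Arguments slam_delta : clear implicits.

Lemma slam_idem_delta k l : slam_idem k (slam_delta k l) = slam_delta k l.
Proof.
apply/ffunP => t; rewrite !ffunE; case: eqP => [// | tk].
by case: eqP => // tl; case: tk; rewrite tl.
Qed.

Lemma slam_delta_coord k (c : 'I_(lam k) -> C) l :
  (\sum_l' c l' *: slam_delta k l' : carrier SL) (tagged_lam l) = c l.
Proof.
rewrite sum_ffunE (bigD1 l) //= big1 => [|l' l'l]; rewrite !ffunE.
  by rewrite eqxx addr0 [_ *: _]mulr1.
by rewrite eq_Tagged /= eq_sym (negbTE l'l) [_ *: _]mulr0.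
Qed.

Lemma slam_expand k (u : carrier SL) :
  slam_idem k u = u -> u = \sum_l u (tagged_lam l) *: slam_delta k l.
Proof.
move=> ku; apply/ffunP => -[j l0].
case: (eqVneq j k) => [jk | jk]; first by subst j; rewrite slam_delta_coord.
rewrite -{1}ku sum_ffunE !ffunE /= (negbTE jk) big1 // => l _.
rewrite !ffunE; case: eqP => [lj | _]; last by rewrite [_ *: _]mulr0.
by case/eqP: jk; move: (congr1 tag lj).
Qed.

Variable Q : pmod src tgt C.
Local Notation V := (carrier Q).

Definition socle_at k : vset V := fun w => idem k w = w /\ forall h, act h w = 0.

Lemma line_submod k w : socle_at k w -> is_submod (fun t => exists a, t = a *: w).
Proof.
move=> [kw aw]; split; [|split; [|split; [|split]]].
- by exists 0; rewrite scale0r.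
- by move=> _ _ [a ->] [b ->]; exists (a + b); rewrite scalerDl.
- by move=> a _ [b ->]; exists (a * b); rewrite scalerA.
- move=> l _ [a ->]; exists (if l == k then a else 0).
  by rewrite idemZ (idem_at l kw); case: eqP; rewrite ?scaler0 ?scale0r.
- by move=> h _ [a ->]; exists 0; rewrite actZ aw scaler0 scale0r.
Qed.

Section Hull.
Variable f : carrier SL -> V.
Hypotheses (f_morph : is_morph f) (f_inj : injective f).
Hypothesis f_essential : forall S : vset V, is_submod S -> (exists v, S v /\ v <> 0) ->
  exists w, S w /\ w <> 0 /\ exists u, w = f u.

(* The line through [w] is a submodule, so it meets the image of [s_lambda]. *)
Lemma socle_at_image k w : socle_at k w -> exists u, slam_idem k u = u /\ w = f u.
Proof.
have [f_lin [f_idem _]] := f_morph.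
move=> wk; have [-> | w0] := eqVneq w 0.
  by exists 0; rewrite -(lin0 f_lin); split=> //; apply: (idem0 SL).
have line_w : exists v, (exists a, v = a *: w) /\ v <> 0.
  by exists w; split; [exists 1; rewrite scale1r | apply/eqP].
have [_ [[a ->] [aw0 [u fu]]]] := f_essential (line_submod wk) line_w.
have a0 : a != 0 by apply/eqP => a0; apply: aw0; rewrite a0 scale0r.
exists (slam_idem k (a^-1 *: u)); split; first exact: (idem_idem (M := SL) k (a^-1 *: u)).
rewrite (f_idem k (a^-1 *: u) : f (slam_idem k _) = _) (linZ f_lin) -fu.
by rewrite scalerA mulVf // scale1r wk.1.
Qed.

Lemma codim_socle_at k : codim (@zero_set C V) (socle_at k) (lam k).
Proof.
have [f_lin [f_idem f_act]] := f_morph.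
exists [tuple f (slam_delta k l) | l < lam k]; split; [|split].
- move=> l; rewrite tnth_mktuple; split.
    by rewrite -(f_idem k (slam_delta k l)) /= slam_idem_delta.
  by move=> h; rewrite -(f_act h (slam_delta k l)) /slam_act /= (lin0 f_lin).
- move=> c comb0 l; rewrite -(slam_delta_coord c l).
  suff -> : \sum_l' c l' *: slam_delta k l' = 0 by rewrite ffunE.
  apply: f_inj; rewrite (lin_sum f_lin) (lin0 f_lin) -[RHS]comb0.
  by apply: eq_bigr => l' _; rewrite (linZ f_lin) tnth_mktuple.
- move=> w /socle_at_image [u [ku ->]]; exists (fun l => u (tagged_lam l)).
  apply/eqP; rewrite subr_eq0 {1}(slam_expand ku) (lin_sum f_lin); apply/eqP.
  by apply: eq_bigr => l _; rewrite (linZ f_lin) tnth_mktuple.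
Qed.

End Hull.

End SocleDimension.

Section Extension.
Variables (I E : finType) (src tgt : E -> I) (C : fieldType) (Q : pmod src tgt C).
Local Notation hs := (hs src tgt).
Local Notation ht := (ht src tgt).
Local Notation V := (carrier Q).
Local Notation W := (V * C^o)%type.

Definition preproj_map (u : {ffun E + E -> V}) : V :=
  \sum_e (act (inl e) (u (inr e)) - act (inr e) (u (inl e))).

Definition arrow_values (w : V) : {ffun E + E -> V} := [ffun h => act h w].

Lemma preproj_map_lin : linear preproj_map.
Proof.
move=> a u v; rewrite /preproj_map scaler_sumr -big_split; apply: eq_bigr => e _ /=.
rewrite !ffunE !actD !actZ scalerBr opprD !addrA; congr (_ + _).
by rewrite addrAC.
Qed.

Lemma arrow_values_lin : linear arrow_values.
Proof. by move=> a u v; apply/ffunP => h; rewrite !ffunE actD actZ. Qed.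

Lemma pair0E : (0 : W) = (0, 0). Proof. by []. Qed.
Lemma pairDE (p p' : W) : p + p' = (p.1 + p'.1, p.2 + p'.2). Proof. by case: p; case: p'. Qed.
Lemma pairZE a (p : W) : a *: p = (a *: p.1, a *: p.2). Proof. by case: p. Qed.
Lemma pairNE (p : W) : - p = (- p.1, - p.2). Proof. by case: p. Qed.
Lemma pair_sumE (J : finType) (F : J -> W) : \sum_j F j = (\sum_j (F j).1, \sum_j (F j).2).
Proof. by apply: (big_rec3 (fun a b c => a = (b, c))) => // j y1 y2 y3 _ ->; rewrite pairDE. Qed.

(* [Q + C v] with [v] at vertex [k] and [h v = z h]: the module in which a
   solution [z] of the preprojective relation becomes the arrow data of a vector. *)
Section ExtensionModule.
Variables (k : I) (z : {ffun E + E -> V}).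
Hypothesis z_vertex : forall h, z h = if hs h == k then idem (ht h) (z h) else 0.
Hypothesis z_preproj : preproj_map z = 0.

Definition ext_idem (l : I) (p : W) : W := (idem l p.1, if l == k then p.2 else 0).
Definition ext_act h (p : W) : W := (act h p.1 + p.2 *: z h, 0).

Lemma ext_idem_lin l : linear (ext_idem l).
Proof.
move=> a [q c] [q' c']; rewrite /ext_idem pairZE pairDE /= pairZE pairDE /=.
by congr pair; [rewrite idemD idemZ | case: eqP => _ //; rewrite scaler0 addr0].
Qed.

Lemma ext_act_lin h : linear (ext_act h).
Proof.
move=> a [q c] [q' c']; rewrite /ext_act pairZE pairDE /= pairZE pairDE /=.
congr pair; last by rewrite scaler0 addr0.
by rewrite actD actZ scalerDr scalerDl -scalerA !addrA; congr (_ + _); rewrite addrAC.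
Qed.

Lemma ext_idem_orth l l' p : ext_idem l (ext_idem l' p) = if l == l' then ext_idem l p else 0.
Proof.
case: p => q c; rewrite /ext_idem /= idem_orth.
case: (eqVneq l l') => [<- | ll']; first by case: eqP.
rewrite pair0E; congr pair.
by case: eqP => // l'k; case: eqP => // lk; rewrite lk l'k eqxx in ll'.
Qed.

Lemma ext_idem_sum p : \sum_(l : I) ext_idem l p = p.
Proof.
case: p => q c; rewrite pair_sumE /ext_idem /=; congr pair; first exact: idem_sum.
by rewrite -big_mkcond big_pred1_eq.
Qed.

Lemma ext_act_idem h p : ext_act h p = ext_idem (ht h) (ext_act h (ext_idem (hs h) p)).
Proof.
case: p => q c; rewrite /ext_idem /ext_act /=; congr pair; last by case: eqP.
rewrite idemD idemZ -act_idem.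
have := z_vertex h; case: eqP => _ zh; first by rewrite -zh.
by rewrite zh idem0 !scaler0.
Qed.

Lemma ext_preproj p :
  \sum_(e : E) (ext_act (inl e) (ext_act (inr e) p) - ext_act (inr e) (ext_act (inl e) p)) = 0.
Proof.
case: p => q c; rewrite pair_sumE; congr pair; last first.
  by rewrite big1 // => e _; rewrite pairNE pairDE /= subrr.
rewrite (eq_bigr (fun e => (act (inl e) (act (inr e) q) - act (inr e) (act (inl e) q))
    + c *: (act (inl e) (z (inr e)) - act (inr e) (z (inl e))))).
  by rewrite big_split /= preproj_rel -scaler_sumr [\sum_e _]z_preproj scaler0 addr0.
move=> e _; rewrite /ext_act pairNE pairDE /= !scale0r !addr0 !actD !actZ.
by rewrite scalerBr opprD addrACA.
Qed.

Definition extension : pmod src tgt C :=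
  PMod ext_idem_lin ext_act_lin ext_idem_orth ext_idem_sum ext_act_idem ext_preproj.

End ExtensionModule.
End Extension.

Arguments preproj_map {I E src tgt C Q} u.
Arguments arrow_values {I E src tgt C Q} w.
Arguments preproj_map_lin {I E src tgt C Q}.
Arguments arrow_values_lin {I E src tgt C Q}.

Section Formula.
Variables (I E : finType) (src tgt : E -> I) (C : fieldType) (Q : pmod src tgt C).
Local Notation hs := (hs src tgt).
Local Notation ht := (ht src tgt).
Local Notation V := (carrier Q).
Local Notation zero := (@zero_set C V).
Variable lam : I -> nat.
Hypothesis hQ : is_q_lambda lam Q.
Variable x : vset V.
Hypotheses (hx : is_submod x) (fx : fd_nilpotent x).
Variable k : I.

Definition arrow_data : vset {ffun E + E -> V} := fun u => forall h,
  if hs h == k then at_vertex (ht h) x (u h) else u h = 0.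

Lemma arrow_data_in u h : arrow_data u -> x (u h).
Proof. by move/(_ h); case: eqP => _ [] // ->; apply: submod0. Qed.

Section OntoArrowData.
Variable z : {ffun E + E -> V}.
Hypotheses (z_data : arrow_data z) (z_preproj : preproj_map z = 0).

Let z_vertex h : z h = if hs h == k then idem (ht h) (z h) else 0.
Proof. by have := z_data h; case: eqP => _ // [_ ->]. Qed.

Let emb (q : V) : carrier (extension z_vertex z_preproj) := (q, 0).

Let emb_morph : is_morph emb.
Proof.
split; [|split].
- by move=> a q q'; rewrite /emb /= pairZE pairDE /= scaler0 addr0.
- by move=> l q; rewrite /emb /= /ext_idem /=; case: eqP.
- by move=> h q; rewrite /emb /= /ext_act /= scale0r addr0.
Qed.

Let act_new h : act h ((0, 1) : carrier (extension z_vertex z_preproj)) = emb (z h).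
Proof. by rewrite /= /ext_act /emb /= act0 scale1r add0r. Qed.

Let idem_new : idem k ((0, 1) : carrier (extension z_vertex z_preproj)) = (0, 1).
Proof. by rewrite /= /ext_idem /= idem0 eqxx. Qed.

(* A vector [(q, c)] lies in [0 + emb (S + x) + C (0, 1)] for a finite-dimensional
   nilpotent [S] containing [q]. *)
Lemma extension_loc_nilpotent : loc_nilpotent Q -> loc_nilpotent (extension z_vertex z_preproj).
Proof.
move=> Q_ln [q c]; have [S [hS [fS Sq]]] := Q_ln q.
have [hT fT] := fd_nilpotent_sum_image (is_morph_id Q) hS fS hx fx.
have [hU fU] := fd_nilpotent_sum_image emb_morph (zero_submod _) (fd_nilpotent0 _) hT fT.
set U := sumset _ _ in hU fU.
have U_new h : U (act h ((0, 1) : carrier (extension z_vertex z_preproj))).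
  rewrite act_new; apply: sumset_r; first exact: zero_submod.
  exists (z h); split=> //; apply: sumset_r => //; exists (z h); split=> //.
  exact: arrow_data_in.
exists (add_line U (0, 1)); split; first exact: add_line_submod idem_new U_new.
split; first exact: fd_nilpotent_add_line idem_new U_new.
exists c; apply: sumset_r; first exact: zero_submod.
exists q; split.
  by exists q, 0; rewrite addr0; do 2!split=> //; exists 0; split=> //; apply: submod0.
by rewrite /emb pairZE pairNE pairDE /= scaler0 oppr0 addr0 [_ *: _]mulr1 subrr.
Qed.

Lemma arrow_values_onto : exists w, socle_preimage_at x k w /\ arrow_values w = z.
Proof.
have [Q_ln [Q_inj _]] := hQ.
have emb_inj : injective emb by move=> q q' [].
have [w [[_ [w_idem w_act]] w_emb]] :=
  Q_inj Q _ emb id Q_ln (extension_loc_nilpotent Q_ln) emb_morph emb_inj (is_morph_id Q).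
exists (w (0, 1)); split; [split|].
- by rewrite -w_idem idem_new.
- by move=> h; rewrite -w_act act_new w_emb; apply: arrow_data_in.
- by apply/ffunP => h; rewrite ffunE -w_act act_new w_emb.
Qed.

End OntoArrowData.

Lemma subspace_arrow_data : is_subspace arrow_data.
Proof.
have hxv l := subspace_at_vertex l hx.
split; [|split].
- by move=> h; rewrite ffunE; case: eqP => _ //; apply: subspace0.
- move=> u v u_data v_data h; rewrite ffunE; move: (u_data h) (v_data h).
  by case: eqP => _; [apply: subspaceD | move=> -> ->; rewrite addr0].
- move=> a v v_data h; rewrite ffunE; move: (v_data h).
  by case: eqP => _; [apply: subspaceZ | move=> ->; rewrite scaler0].
Qed.

Lemma codim_arrow_data :
  codim (@zero_set C _) arrow_data (\sum_h if hs h == k then dim_at x (ht h) else 0%N).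
Proof.
pose Y h := if hs h == k then at_vertex (ht h) x else zero.
have Y_sub h : is_subspace (Y h).
  by rewrite /Y; case: eqP => _; [apply: subspace_at_vertex | apply: zero_subspace].
have Y_codim h : codim zero (Y h) (if hs h == k then dim_at x (ht h) else 0%N).
  by rewrite /Y; case: eqP => _; [apply: codim_dim_at | apply: codim0].
apply: codim_ext (codim_prod Y_sub Y_codim) => // u.
by split=> u_data h; move: (u_data h); rewrite /Y; case: eqP.
Qed.

Lemma preproj_map_arrow_span u :
  arrow_data u -> at_vertex k (arrow_span x) (preproj_map u).
Proof.
move=> u_data; split.
  exists [ffun h => match h with inl e => u (inr e) | inr e => - u (inl e) end].
  split=> [[e|e]|]; first by rewrite ffunE; apply: arrow_data_in.
    by rewrite ffunE; apply: submodN => //; apply: arrow_data_in.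
  rewrite big_sumType /preproj_map sumrB; congr (_ + _).
    by apply: eq_bigr => e _; rewrite ffunE.
  by rewrite -sumrN; apply: eq_bigr => e _; rewrite ffunE actN.
rewrite /preproj_map idem_sumr; apply: eq_bigr => e _; rewrite idemB !idem_act /=.
have /= data_l := u_data (inl e); have /= data_r := u_data (inr e).
case: ifP => [_ | /negbT tk]; case: ifP => [_ | /negbT sk] //.
- by move: data_l; rewrite eq_sym (negbTE sk) => ->; rewrite act0 subr0.
- by move: data_r; rewrite eq_sym (negbTE tk) => ->; rewrite act0 sub0r.
move: data_l data_r; rewrite eq_sym (negbTE sk) eq_sym (negbTE tk) => -> ->.
by rewrite !act0 subrr.
Qed.

Lemma arrow_span_preproj_image v :
  at_vertex k (arrow_span x) v -> image_of preproj_map arrow_data v.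
Proof.
move=> [[f [xf ->]] kv].
pose u : {ffun E + E -> V} := [ffun h => match h with
  | inl e => if src e == k then - idem (tgt e) (f (inr e)) else 0
  | inr e => if tgt e == k then idem (src e) (f (inl e)) else 0 end].
exists u; split.
  case=> e; rewrite /u ffunE /=; case: eqP => _ //.
    by split; [apply: submodN; last apply: submodI | rewrite idemN idem_idem].
  by split; [apply: submodI | rewrite idem_idem].
rewrite -kv idem_sumr big_sumType /= -big_split /preproj_map; apply: eq_bigr => e _ /=.
rewrite !idem_act /u !ffunE /= !(eq_sym k).
have srcE := act_idem_src (inl e) (f (inl e)); have tgtE := act_idem_src (inr e) (f (inr e)).
by case: ifP => _; case: ifP => _;
  rewrite ?act0 ?actN ?opprK ?subr0 ?sub0r ?addr0 ?add0r ?srcE ?tgtE.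
Qed.

Lemma preproj_image :
  set_eq (image_of preproj_map arrow_data) (at_vertex k (arrow_span x)).
Proof.
move=> v; split; last exact: arrow_span_preproj_image.
by move=> [u [u_data <-]]; apply: preproj_map_arrow_span.
Qed.

Lemma subspace_socle_preimage_at : is_subspace (socle_preimage_at x k).
Proof.
split; [|split].
- by split=> [|h]; rewrite ?idem0 // act0; apply: submod0.
- move=> u v [ku xu] [kv xv]; split=> [|h]; first by rewrite idemD ku kv.
  by rewrite actD; apply: submodD.
- move=> a v [kv xv]; split=> [|h]; first by rewrite idemZ kv.
  by rewrite actZ; apply: submodZ.
Qed.

Lemma arrow_values_image :
  set_eq (image_of arrow_values (socle_preimage_at x k)) (kernel_in preproj_map arrow_data).
Proof.
move=> u; split; last by move=> [u_data /(arrow_values_onto u_data)] [w [? ?]]; exists w.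
move=> [w [[kw xw] <-]]; split; last first.
  by rewrite /preproj_map; under eq_bigr do rewrite !ffunE; apply: preproj_rel.
move=> h; rewrite ffunE; case: eqP => hk.
  by split; [apply: xw | rewrite idem_act eqxx].
by rewrite -kw act_idem_ne //; apply/eqP => kh; apply: hk; rewrite kh.
Qed.

Lemma arrow_values_kernel :
  set_eq (kernel_in arrow_values (socle_preimage_at x k)) (socle_at k).
Proof.
move=> w; split=> [[[kw _] w0] | [kw w0]].
  by split=> // h; have := congr1 (fun u : {ffun E + E -> V} => u h) w0; rewrite !ffunE.
split; first by split=> // h; rewrite w0; apply: submod0.
by apply/ffunP => h; rewrite !ffunE w0.
Qed.

(* Rank-nullity for [preproj_map] on [arrow_data] and for [arrow_values] on
   [socle_preimage_at x k], together with [e_k rad x = e_k (arrow_span x)]. *)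
Lemma phi_sub_eps :
  (phi k x)%:Z - (eps k x)%:Z =
  (lam k)%:Z + (\sum_h if hs h == k then dim_at x (ht h) else 0%N)%:Z - 2%:Z * (dim_at x k)%:Z.
Proof.
have [Q_ln [_ [f [f_morph [f_inj f_ess]]]]] := hQ.
have hZ := zero_subspace V; have hP := zero_subspace {ffun E + E -> V}.
have hJ := subspace_at_vertex k (arrow_span_submod hx).
have hX := subspace_at_vertex k hx.
have cP := codim_arrow_data.
have [z cZ] :=
  codim_sub_exists (T' := kernel_in preproj_map arrow_data) hP cP (fun u => @proj1 _ _).
have [b cB] := codim_image_exists preproj_map_lin cP.
have pE := codim_unique hP cP (codim_rank_nullity preproj_map_lin subspace_arrow_data cZ cB).
have cW : codim zero (socle_preimage_at x k) (lam k + z).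
  apply: (codim_rank_nullity arrow_values_lin subspace_socle_preimage_at).
    exact: codim_ext (set_eq_sym arrow_values_kernel) (codim_socle_at f_morph f_inj f_ess k).
  exact: codim_ext (set_eq_sym arrow_values_image) cZ.
have cX := codim_dim_at k hx fx.
have cJ := codim_ext (fun t => iff_refl _) preproj_image cB.
have JX : set_sub (at_vertex k (arrow_span x)) (at_vertex k x).
  by move=> t [Jt kt]; split=> //; apply: arrow_span_sub Jt.
have XW : set_sub (at_vertex k x) (socle_preimage_at x k).
  by move=> t [xt kt]; split=> // h; apply: submodA.
have [e cE] := codim_mod_exists hJ (zero_set_sub hJ) cX.
have [d cF] := codim_mod_exists hX (zero_set_sub hX) cW.
have xE := codim_unique hZ cX (codim_add hZ hJ (zero_set_sub hJ) JX cJ cE).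
have wE := codim_unique hZ cW (codim_add hZ hX (zero_set_sub hX) XW cX cF).
have epsE : eps k x = e.
  apply: qdimE (subspace_ext (set_eq_sym (radical_at_vertex hx fx k)) hJ) _.
  exact: codim_ext (set_eq_sym (radical_at_vertex hx fx k)) (fun t => iff_refl _) cE.
have phiE : phi k x = d.
  apply: qdimE hX _.
  exact: codim_ext (fun t => iff_refl _) (set_eq_sym (socle_over_at_vertex Q_ln hx k)) cF.
rewrite phiE epsE pE; lia.
Qed.

End Formula.

(* Each edge [e] between [i] and [j] gives the two arrows [inl e] and [inr e]
   of the double quiver, exactly one of which goes from [i] to [j]. *)
Lemma cartanE (I E : finType) (src tgt : E -> I) (noloop : forall e, src e != tgt e) i j :
  cartan src tgt i j =
  (2 * (i == j))%N%:Z - (\sum_h if hs src tgt h == i then (ht src tgt h == j : nat) else 0%N)%:Z.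
Proof.
rewrite /cartan big_sumType /=.
have [<- | ij] := eqVneq i j.
  rewrite !big1 ?subr0 // => e _.
    by case: (eqVneq (src e) i) => // si; case: eqP => // ti; case/eqP: (noloop e); rewrite si ti.
  by case: (eqVneq (tgt e) i) => // ti; case: eqP => // si; case/eqP: (noloop e); rewrite si ti.
rewrite muln0 sub0r; congr (- (Posz _)).
rewrite -big_split /= -sum1_card big_mkcond /=; apply: eq_bigr => e _; rewrite inE.
case: (eqVneq (src e) i) => [si | si]; case: (eqVneq (tgt e) j) => [tj | tj];
  case: (eqVneq (src e) j) => [sj | sj]; case: (eqVneq (tgt e) i) => [ti | ti] //=.
by case/eqP: ij; rewrite -si sj.
Qed.

Unset Implicit Arguments.

Theorem mainTheorem5 (R : realType) (I E : finType) (src tgt : E -> I)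
    (noloop : forall e : E, src e != tgt e)
    (lam : I -> nat)
    (Q : pmod src tgt R[i]) (hQ : is_q_lambda lam Q)
    (x y : vset (carrier Q))
    (hx : is_submod x) (hxnil : fd_nilpotent x)
    (i j : I)
    (hy : is_submod y) (hxy : quot_is_simple_s x y j) :
  (phi i y)%:Z - (eps i y)%:Z = (phi i x)%:Z - (eps i x)%:Z - cartan src tgt i j.
Proof.
have fy := fd_nilpotent_quot_simple hx hy hxy hxnil.
have dimE l := dim_at_quot_simple hx hy hxy l hxnil.
have sumE : (\sum_h (if hs src tgt h == i then dim_at y (ht src tgt h) else 0) =
    \sum_h (if hs src tgt h == i then dim_at x (ht src tgt h) else 0) +
    \sum_h (if hs src tgt h == i then (ht src tgt h == j : nat) else 0))%N.
  by rewrite -big_split; apply: eq_bigr => h _ /=; case: ifP; rewrite ?dimE.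
rewrite (phi_sub_eps hQ hy fy) (phi_sub_eps hQ hx hxnil) (cartanE noloop) sumE dimE.
lia.
Qed.
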